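(* Assume (FWW) for a flow $\Phi_t$ on $\mathbb{R}^n$ and a $k$-cone $C$. Let $K\subset\mathbb{R}^n$ be a compact invariant set and let $\mathbb{R}^n=E_y\oplus F_y$, $y\in K$, be a $k$-exponential separation of $(\Phi_t,D\Phi_t)$ along $K$ associated with $C$. Then there exists a constant $\delta''>0$ such that $d(v,C)>\delta''$ for every $v\in\bigcup_{y\in K}(F_y\cap S)$, where $S$ is the unit sphere of $\mathbb{R}^n$ and $d(v,C)=\inf_{w\in C}\|v-w\|$.
   Context: A closed set $C\subset\mathbb{R}^n$ is a $k$-cone if $lv\in C$ for all $v\in C$, $l\in\mathbb{R}$, and the maximal dimension of a linear subspace contained in $C$ is $k$. $C$ is $k$-solid if there is a $k$-dimensional subspace $W$ with $W\setminus\{0\}\subset\operatorname{Int}C$. Write $x\sim y$ if $x-y\in C$ and $x\approx y$ if $x-y\in\operatorname{Int}C$. A flow $\Phi_t$ is strongly monotone with respect to a $k$-solid cone $C$ if $x\sim y$ implies $\Phi_t(x)\sim\Phi_t(y)$ for $t\ge0$, and $x\ne y$, $x\sim y$ imply $\Phi_t(x)\approx\Phi_t(y)$ for $t>0$. Assumption (FWW): the flow $\Phi_t$ on $\mathbb{R}^n$ is $C^{1,\alpha}$-smooth ($C^1$ with locally $\alpha$-Hölder derivative, $\alpha\in(0,1]$), strongly monotone with respect to the $k$-cone $C$, and $D_x\Phi_t(C\setminus\{0\})\subset\operatorname{Int}C$ for $t>0$. A $k$-exponential separation along a compact invariant set $K$ associated with $C$ consists of continuous (in the Grassmannian gap metric)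 families of $k$-dimensional subspaces $E_x$ and $(n-k)$-dimensional subspaces $F_x$, $x\in K$, such that: $\mathbb{R}^n=E_x\oplus F_x$; $D_x\Phi_tE_x=E_{\Phi_t(x)}$, $D_x\Phi_tF_x\subset F_{\Phi_t(x)}$ for $t>0$; there are $M>0$, $0<\gamma<1$ with $\|D_x\Phi_tw\|\le M\gamma^t\|D_x\Phi_tv\|$ for all $x\in K$, unit $w\in F_x$, unit $v\in E_x$, $t\ge0$; and $E_x\subset\operatorname{Int}C\cup\{0\}$, $F_x\cap C=\{0\}$. *)

(* R : realType, vectors of R^n are row vectors 'rV[R]_n,
   linear subspaces of R^n are row spaces of square matrices 'M[R]_n. *)
From HB Require Import structures.
From mathcomp Require Import all_boot all_order all_algebra.
From mathcomp Require Import all_classical all_reals all_analysis.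
Set Implicit Arguments. Unset Strict Implicit. Unset Printing Implicit Defensive.
Import Order.TTheory GRing.Theory Num.Theory.
Import numFieldNormedType.Exports.
Local Open Scope classical_set_scope.
Local Open Scope ring_scope.

Section Defs.
Variables (R : realType) (n : nat).
Local Notation V := 'rV[R]_n.

Definition enorm (v : V) : R := Num.sqrt (\sum_(i < n) (v ord0 i) ^+ 2).

Definition setdist (v : V) (A : set V) : R := inf [set enorm (v - w) | w in A].

Definition usphere : set V := [set v | enorm v = 1].

Definition subsp (U : 'M[R]_n) : set V := [set v | (v <= U)%MS].

Definition gap_half (U W : 'M[R]_n) : R :=
  sup [set setdist u (subsp W) | u in subsp U `&` usphere].
Definition gap (U W : 'M[R]_n) : R := Num.max (gap_half U W) (gap_half W U).

Definition kcone (k : nat) (C : set V) : Prop :=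
  [/\ closed C,
      (forall (l : R) v, C v -> C (l *: v)),
      (exists W : 'M[R]_n, \rank W = k /\ subsp W `<=` C) &
      (forall W : 'M[R]_n, subsp W `<=` C -> (\rank W <= k)%N)].

Definition ksolid (k : nat) (C : set V) : Prop :=
  exists W : 'M[R]_n, \rank W = k /\
    (forall v, (v <= W)%MS -> v != 0 -> interior C v).

(* Jacobian (as a matrix acting on row vectors) of x |-> Phi t x *)
Definition Dflow (Phi : R -> V -> V) (t : R) (x : V) : 'M[R]_n :=
  lin1_mx ('d (Phi t) x).

Definition is_flow (Phi : R -> V -> V) : Prop :=
  [/\ (forall x, Phi 0 x = x),
      (forall s t x, Phi (s + t) x = Phi s (Phi t (x))) &
      continuous (fun p : R * V => Phi p.1 p.2)].

Definition C1alpha (alpha : R) (Phi : R -> V -> V) : Prop :=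
  (forall t x, differentiable (Phi t) x) /\
  (forall t x0, exists r : R, exists L : R, 0 < r /\
     forall y z, enorm (y - x0) < r -> enorm (z - x0) < r ->
       `|Dflow Phi t y - Dflow Phi t z| <= L * powR (enorm (y - z)) alpha).

(* strongly monotone w.r.t. C  (x ~ y iff x - y in C, x ≈ y iff x - y in Int C) *)
Definition strongly_monotone (k : nat) (C : set V) (Phi : R -> V -> V) : Prop :=
  [/\ ksolid k C,
      (forall x y t, C (x - y) -> 0 <= t -> C (Phi t x - Phi t y)) &
      (forall x y t, x != y -> C (x - y) -> 0 < t ->
         interior C (Phi t x - Phi t y))].

Definition FWW (alpha : R) (k : nat) (C : set V) (Phi : R -> V -> V) : Prop :=
  [/\ is_flow Phi /\ (0 < alpha /\ alpha <= 1), C1alpha alpha Phi,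
      kcone k C, strongly_monotone k C Phi &
      (forall t x v, 0 < t -> C v -> v != 0 -> interior C (v *m Dflow Phi t x))].

Definition compact_invariant (Phi : R -> V -> V) (K : set V) : Prop :=
  compact K /\ (forall t, Phi t @` K = K).

Definition exp_separation (k : nat) (C : set V) (Phi : R -> V -> V) (K : set V)
    (E F : V -> 'M[R]_n) : Prop :=
  [/\
      (forall x, K x -> [/\ \rank (E x) = k, \rank (F x) = (n - k)%N,
                            ((E x + F x)%MS == (1%:M : 'M[R]_n))%MS &
                            ((E x :&: F x)%MS == (0 : 'M[R]_n))%MS]),
      (forall x, K x -> forall eps : R, 0 < eps -> exists d : R, 0 < d /\
         forall y, K y -> enorm (y - x) < d ->
           gap (E y) (E x) < eps /\ gap (F y) (F x) < eps),
      (forall x t, K x -> 0 < t ->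
         ((E x *m Dflow Phi t x) == E (Phi t x))%MS /\
         ((F x *m Dflow Phi t x) <= F (Phi t x))%MS),
      (exists M : R, exists gamma : R, [/\ 0 < M, 0 < gamma, gamma < 1 &
         forall x w v t, K x -> (w <= F x)%MS -> enorm w = 1 ->
           (v <= E x)%MS -> enorm v = 1 -> 0 <= t ->
           enorm (w *m Dflow Phi t x)
             <= M * powR gamma t * enorm (v *m Dflow Phi t x)]) &
      (forall x, K x ->
         (forall v, (v <= E x)%MS -> v != 0 -> interior C v) /\
         (forall v, (v <= F x)%MS -> C v -> v = 0))].

End Defs.

From HB Require Import structures.
From mathcomp Require Import all_boot all_order all_algebra.
From mathcomp Require Import all_classical all_reals all_analysis.
From mathcomp Require Import lra.
Import Order.TTheory GRing.Theory Num.Theory.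
Import numFieldNormedType.Exports.
Local Open Scope classical_set_scope.
Local Open Scope ring_scope.
Set Implicit Arguments. Unset Strict Implicit. Unset Printing Implicit Defensive.

(* The unit vectors of the fibres F_y, y in K, form a compact set: K is
   compact, and a limit of unit vectors of F_(y_k) with y_k -> y lies in F_y
   because y |-> F_y is continuous in the gap metric and subspaces are closed.
   This compact set misses the closed cone C, as F_y meets C only in 0, hence
   lies at positive distance from it. *)

Lemma compact_closed_disjoint_dist {R : realFieldType} {M : normedModType R}
    (A B : set M) : compact A -> closed B -> A `&` B = set0 ->
  exists2 d, 0 < d & forall a b, A a -> B b -> d <= `|a - b|.
Proof.
move=> /compact_near_coveringP cA cB AB0.
have near_A a : A a -> \forall a' \near a & d \near (0 : R)^'+,
    forall b, B b -> d <= `|a' - b|.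
  move=> Aa; have nBa : ~ B a by move=> Ba; rewrite -[False]/(set0 a) -AB0.
  have [r /= r0 Br] := closed_disjoint_closed_ball cB nBa.
  pose s := r / 2; have s0 : 0 < s by rewrite divr_gt0.
  have Bs : closed_ball a s `&` B = set0.
    by apply: Br => //=; rewrite sub0r normrN gtr0_norm // /s; lra.
  near=> a' d => /= b Bb.
  have sab : s < `|a - b|.
    rewrite ltNge; apply/negP => abs.
    suff : (closed_ball a s `&` B) b by rewrite Bs.
    by split => //; rewrite closed_ballE.
  have aa' : `|a - a'| < s / 2.
    by near: a'; apply: (@cvgr_dist_lt _ _ _ _ _ id) => //; rewrite divr_gt0.
  have ds : d < s / 2 by near: d; apply: nbhs_right_lt; rewrite divr_gt0.
  have := ler_distD a' a b; lra.
have near_d : \forall d \near (0 : R)^'+,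
    A `<=` (fun a => forall b, B b -> d <= `|a - b|).
  by apply: cA; exact: near_A.
near (0 : R)^'+ => d.
exists d; first by near: d; exact: nbhs_right_gt.
by move=> a b Aa Bb; apply: (near near_d d).
Unshelve. all: by end_near. Qed.

Section EuclideanNorm.
Variables (R : realType) (n : nat).
Local Notation V := 'rV[R]_n.

Lemma enorm0 : enorm (0 : V) = 0.
Proof. by rewrite /enorm big1 ?sqrtr0 // => i _; rewrite mxE expr0n. Qed.

Lemma normr_le_enorm (v : V) : `|v| <= enorm v.
Proof.
rewrite [leLHS]/Num.norm /= mx_normrE.
apply/bigmax_leP; split=> [|[i j] _ /=]; first exact: sqrtr_ge0.
rewrite (ord1 i) -sqrtr_sqr /enorm ler_wsqrtr // (bigD1 j) //= lerDl.
by apply: sumr_ge0 => k _; exact: sqr_ge0.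
Qed.

Lemma continuous_enorm : continuous (@enorm R n).
Proof.
have -> : @enorm R n = Num.sqrt \o \sum_(i < n) (fun v : V => v ord0 i ^+ 2).
  by apply/funext => v; rewrite fct_sumE.
move=> v; apply: continuous_comp; last exact: sqrt_continuous.
apply: (big_ind (fun f : V -> R => {for v, continuous f})) => //.
- exact: cst_continuous.
- by move=> f g; exact: continuousD.
- move=> i _.
  apply: (@continuous_comp _ _ _ (fun w : V => w ord0 i) (fun x : R => x ^+ 2)).
  - exact: coord_continuous.
  - exact: exprn_continuous.
Qed.

Lemma near_enorm_lt (x : V) d : 0 < d -> \forall y \near x, enorm (y - x) < d.
Proof.
have : {for x, continuous (fun y : V => enorm (y - x))}.
  apply: continuous_comp; last exact: continuous_enorm.
  exact: (cvgB cvg_id (cvg_cst x)).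
move=> cont d0; apply: cvgr_lt cont _ _; by rewrite subrr enorm0.
Qed.

End EuclideanNorm.

Section RowSpaces.
Variable R : realType.

Lemma normr_mulmx_le {p q r : nat} (A : 'M[R]_(p, q)) (B : 'M[R]_(q, r)) :
  `|A *m B| <= q%:R * `|A| * `|B|.
Proof.
rewrite [leLHS]/Num.norm /= mx_normrE.
apply/bigmax_leP; split=> [|[i j] _ /=]; first by rewrite !mulr_ge0.
rewrite mxE (le_trans (ler_norm_sum _ _ _)) //.
have entry_le m m' (M : 'M[R]_(m, m')) i' j' : `|M i' j'| <= `|M|.
  rewrite [leRHS]/Num.norm /= mx_normrE.
  by apply/bigmax_geP; right; exists (i', j').
apply: (@le_trans _ _ (\sum_(k < q) `|A| * `|B|)).
  by apply: ler_sum => k _; rewrite normrM ler_pM.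
by rewrite sumr_const card_ord -mulrA mulr_natl.
Qed.

Lemma continuous_mulmxr p q (B : 'M[R]_(p, q)) :
  continuous (mulmxr B : 'rV_p -> 'rV_q).
Proof.
apply: bounded_linear_continuous; apply/linear_boundedP.
near=> c => x; apply: le_trans (normr_mulmx_le _ _) _.
rewrite mulrAC; apply: ler_wpM2r; first exact: normr_ge0.
near: c; apply: nbhs_pinfty_ge; by rewrite realE mulr_ge0.
Unshelve. all: by end_near. Qed.

Lemma closed_subsp n (U : 'M[R]_n) : closed (subsp U).
Proof.
have -> : subsp U = mulmxr (cokermx U) @^-1` [set 0].
  by apply/seteqP; split => v; rewrite /subsp /= submxE => /eqP.
apply: preimage_closed; first by move=> v _; exact: continuous_mulmxr.
exact/accessible_closed_set1/hausdorff_accessible/norm_hausdorff.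
Qed.

End RowSpaces.

Section Gap.
Variables (R : realType) (n : nat).
Local Notation V := 'rV[R]_n.

Lemma setdist_le (v : V) {A : set V} {w : V} :
  A w -> setdist v A <= enorm (v - w).
Proof.
move=> Aw; apply: ge_inf; last by exists w.
by exists 0 => _ [x _ <-]; exact: sqrtr_ge0.
Qed.

Lemma gap_approx (U W : 'M[R]_n) (u : V) e : (u <= U)%MS -> enorm u = 1 ->
  gap U W < e -> exists2 w, (w <= W)%MS & enorm (u - w) < e.
Proof.
move=> uU u1; rewrite /gap gt_max => /andP[gapUW _].
have : setdist u (subsp W) < e.
  apply: le_lt_trans gapUW; apply: ub_le_sup; last by exists u.
  exists 1 => _ [u' [_ u'1] <-].
  by apply: le_trans (setdist_le u' (sub0mx 1 W)) _; rewrite subr0 u'1.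
move=> /inf_lt[|_ [w Ww <-]]; last by exists w.
by exists (enorm (u - 0)); exists 0 => //; exact: sub0mx.
Qed.

End Gap.

Section UnitBundle.
Variables (R : realType) (n : nat) (K : set 'rV[R]_n) (F : 'rV[R]_n -> 'M[R]_n).
Local Notation V := 'rV[R]_n.

Definition unit_bundle : set (V * V) :=
  [set p | [/\ K p.1, (p.2 <= F p.1)%MS & enorm p.2 = 1]].

Hypothesis K_compact : compact K.
Hypothesis F_gap_continuous : forall x, K x -> forall e, 0 < e ->
  exists d, 0 < d /\ forall y, K y -> enorm (y - x) < d -> gap (F y) (F x) < e.

Lemma closed_unit_bundle : closed unit_bundle.
Proof.
move=> [x v] clxv.
have [Kx v1] : K x /\ enorm v = 1.
  have closed_base : closed [set p : V * V | K p.1 /\ enorm p.2 = 1].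
    apply: closedI.
      apply: (preimage_closed (f := fst)); first by move=> p _; exact: cvg_fst.
      apply: compact_closed K_compact; exact: norm_hausdorff.
    apply: (@preimage_closed _ _ (@enorm R n \o snd) [set r | r = 1]).
      move=> p _; apply: continuous_comp; first exact: cvg_snd.
      exact: continuous_enorm.
    exact: closed_eq.
  by apply: (closed_base (x, v)); apply: closureS clxv => p [].
split => //=; apply: closed_subsp => B /nbhs_ballP[e e0 eB].
have e20 : 0 < e / 2 by rewrite divr_gt0.
have [d [d0 gapF]] := F_gap_continuous Kx e20.
have near_xv : nbhs (x, v) [set p | enorm (p.1 - x) < d /\ ball v (e / 2) p.2].
  exists ([set y | enorm (y - x) < d], ball v (e / 2)); last by move=> p [].
  by split; [exact: near_enorm_lt | exact: nbhsx_ballx].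
have [[y w] [[/= Ky Fw w1] [/= xy vw]]] := clxv _ near_xv.
have [u Fu wu] := gap_approx Fw w1 (gapF y Ky xy).
exists u; split => //; apply: eB; rewrite -ball_normE /= in vw *.
have := ler_distD w v u; have := normr_le_enorm (w - u); lra.
Qed.

Lemma compact_unit_bundle : compact unit_bundle.
Proof.
have ball_compact : compact (closed_ball (0 : V) 1).
  apply: bounded_closed_compact; last exact: closed_ball_closed.
  rewrite closed_ballE //; exists 1; split => // r r1 v.
  by rewrite /closed_ball_ /= sub0r normrN => /le_trans; apply; exact: ltW.
apply: subclosed_compact closed_unit_bundle (compact_setX K_compact ball_compact) _.
move=> [y v] [Ky _ v1]; split => //=.
by rewrite closed_ballE // /closed_ball_ /= sub0r normrN -v1 normr_le_enorm.
Qed.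

End UnitBundle.

Theorem lemma3p4 (R : realType) (n k : nat) (alpha : R) (C : set 'rV[R]_n)
    (Phi : R -> 'rV[R]_n -> 'rV[R]_n) (K : set 'rV[R]_n)
    (E F : 'rV[R]_n -> 'M[R]_n) :
  FWW alpha k C Phi ->
  compact_invariant Phi K ->
  exp_separation k C Phi K E F ->
  exists delta : R, 0 < delta /\
    forall y v, K y -> (v <= F y)%MS -> enorm v = 1 -> setdist v C > delta.
Proof.
move=> [_ _ [C_closed _ [W [_ WC]] _] _ _] [K_compact _] [_ EF_gap _ _ EF_cone].
have F_gap : forall x, K x -> forall e, 0 < e -> exists d, 0 < d /\
    forall y, K y -> enorm (y - x) < d -> gap (F y) (F x) < e.
  move=> x Kx e e0; have [d [d0 gapEF]] := EF_gap x Kx e e0.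
  by exists d; split => // y Ky xy; case: (gapEF y Ky xy).
have X_compact : compact (snd @` unit_bundle K F).
  apply: continuous_compact; last exact: compact_unit_bundle.
  by apply: continuous_subspaceT => p; exact: cvg_snd.
have XC0 : snd @` unit_bundle K F `&` C = set0.
  apply/seteqP; split => // _ [[[y v] [Ky Fv v1] <-] Cv].
  move: v1; rewrite /= ((EF_cone y Ky).2 v Fv Cv) enorm0 => /eqP.
  by rewrite eq_sym oner_eq0.
have [d d0 Xd] := compact_closed_disjoint_dist X_compact C_closed XC0.
exists (d / 2); split => [|y v Ky Fv v1]; first by rewrite divr_gt0.
apply: (@lt_le_trans _ _ d); first lra.
apply: lb_le_inf.
  by exists (enorm (v - 0)), 0 => //; apply: WC; exact: sub0mx.
move=> _ [w Cw <-]; apply: le_trans (normr_le_enorm _).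
by apply: Xd Cw; exists (y, v).
Qed.
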